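(* Let $(\mathcal{A},\varphi)$ be a non-commutative probability space (a unital $*$-algebra with a state $\varphi$) and let $(\mathcal{A}_{1,\ell},\mathcal{A}_{1,r})$ and $(\mathcal{A}_{2,\ell},\mathcal{A}_{2,r})$ be pairs of $*$-subalgebras of $\mathcal{A}$ which are bi-monotonically independent (in the order $1<2$) with respect to $\varphi$. If $\varphi|_{\mathcal{A}_{1,\ell}}\ne0$, then $\varphi(ab)=\varphi(ba)=\varphi(a)\varphi(b)$ for all $a\in\mathcal{A}_{2,\ell}$ and $b\in\mathcal{A}_{2,r}$. Consequently the bi-monotonic product of states is not a state in general.
   Context: For algebras $\mathcal{C}_k$, $\sqcup_k\mathcal{C}_k$ denotes the free product without identification of units, $*_k\mathcal{C}_k$ the free product of unital algebras with identification of units, and $\widetilde{\mathcal{C}}=\mathbb{C}1\oplus\mathcal{C}$ the unitization; $\widetilde{\mathcal{C}_1}*\widetilde{\mathcal{C}_2}\cong\widetilde{\mathcal{C}_1\sqcup\mathcal{C}_2}$. Notation. For $n\ge1$ and $\chi:\{1,\dots,n\}\to\{\ell,r\}$ with $\chi^{-1}(\{\ell\})=\{i_1<\dots<i_p\}$ and $\chi^{-1}(\{r\})=\{i_{p+1}>\dots>i_n\}$, let $\prec_\chi$ be the total order $i_1\prec_\chi\cdots\prec_\chi i_n$. A $\chi$-interval is an interval for $\prec_\chi$. For $V=\{v_1<\dots<v_s\}$ write $b_V=b_{v_1}\cdots b_{v_s}$. For $\omega:\{1,\dots,n\}\to K$, $\pi_{\chi,\omega}$ is the unique partition of $\{1,\dots,n\}$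 into blocks $V_1,\dots,V_m$ such that each $V_k$ is a $\chi$-interval, $\max_{\prec_\chi}V_k\prec_\chi\min_{\prec_\chi}V_{k+1}$, $\omega$ is constant on each $V_k$, and $\omega(V_k)\ne\omega(V_{k+1})$. c-bi-free product. Given pairs of unital algebras $(\mathcal{B}_{k,\ell},\mathcal{B}_{k,r})_{k\in K}$ and unital linear functionals $\varphi_k,\psi_k$ on $\mathcal{B}_{k,\ell}*\mathcal{B}_{k,r}$, their c-bi-free product $(\varphi,\psi)$ is the unique pair of unital linear functionals on $*_k(\mathcal{B}_{k,\ell}*\mathcal{B}_{k,r})$ restricting to $\varphi_k,\psi_k$ and such that whenever $b_j\in\mathcal{B}_{\omega(j),\chi(j)}$ with $\psi(b_V)=0$ for all $V\in\pi_{\chi,\omega}$, then $\psi(b_1\cdots b_n)=0$ and $\varphi(b_1\cdots b_n)=\prod_{V\in\pi_{\chi,\omega}}\varphi(b_V)$. Bi-monotonic product. For pairs $(\mathcal{A}_{k,\ell},\mathcal{A}_{k,r})$, $k=1,2$, with linear functionals $\varphi_k$ on $\mathcal{A}_{k,\ell}\sqcup\mathcal{A}_{k,r}$: let $\widetilde{\varphi_k}$ be the unital extension to $\widetilde{\mathcal{A}_{k,\ell}\sqcup\mathcal{A}_{k,r}}$, $\delta_1$ the unital functional on $\widetilde{\mathcal{A}_{1,\ell}\sqcup\mathcal{A}_{1,r}}$ vanishing on $\mathcal{A}_{1,\ell}\sqcup\mathcal{A}_{1,r}$, and $(\widetilde\varphi,\widetilde\psi)$ the c-bi-free product of $(\widetilde{\varphi_1},\delta_1)$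 and $(\widetilde{\varphi_2},\widetilde{\varphi_2})$ for the pairs $(\widetilde{\mathcal{A}_{k,\ell}},\widetilde{\mathcal{A}_{k,r}})$. Then $\varphi_1\rhd\!\!\rhd\varphi_2$ is the restriction of $\widetilde\varphi$ to $(\mathcal{A}_{1,\ell}\sqcup\mathcal{A}_{1,r})\sqcup(\mathcal{A}_{2,\ell}\sqcup\mathcal{A}_{2,r})$. Bi-monotonic independence of two pairs of subalgebras of $(\mathcal{A},\varphi)$ (in the order $1<2$) means $\varphi\circ\iota=\varphi_1\rhd\!\!\rhd\varphi_2$, where $\iota:(\mathcal{A}_{1,\ell}\sqcup\mathcal{A}_{1,r})\sqcup(\mathcal{A}_{2,\ell}\sqcup\mathcal{A}_{2,r})\to\mathcal{A}$ is induced by the inclusions and $\varphi_k=\varphi\circ\iota|_{\mathcal{A}_{k,\ell}\sqcup\mathcal{A}_{k,r}}$. *)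

From HB Require Import structures.
From mathcomp Require Import all_boot all_order all_algebra.
Set Implicit Arguments. Unset Strict Implicit. Unset Printing Implicit Defensive.
Import Order.TTheory GRing.Theory Num.Theory.
Local Open Scope ring_scope.

(* Scalars: an arbitrary numClosedFieldType C (models C; conjugation Num.conj,
   and 0 <= z means "z is real and nonnegative"). *)

Section Defs.
Variables (C : numClosedFieldType) (A : algType C).

Record is_star (star : A -> A) : Prop := {
  star_invol : forall a, star (star a) = a;
  star_mul : forall a b, star (a * b) = star b * star a;
  star_semilin : forall (al : C) a b,
      star (al *: a + b) = Num.conj al *: star a + star b }.

Record is_state (star : A -> A) (phi : A -> C) : Prop := {
  state_lin : forall (al : C) a b, phi (al *: a + b) = al * phi a + phi b;
  state_unit : phi 1 = 1;
  state_pos : forall a, 0 <= phi (star a * a) }.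

Record is_star_subalg (star : A -> A) (S : {pred A}) : Prop := {
  sub0 : 0 \in S;
  subD : forall a b, a \in S -> b \in S -> a + b \in S;
  subZ : forall (al : C) a, a \in S -> al *: a \in S;
  subM : forall a b, a \in S -> b \in S -> a * b \in S;
  subStar : forall a, a \in S -> star a \in S }.

(* Index conventions: algebra index k : bool with false = 1, true = 2;
   side chi : bool with true = left (l), false = right (r). *)
Definition alg1 := false.
Definition alg2 := true.
Definition lft := true.
Definition rgt := false.

Definition fam4 (A1l A1r A2l A2r : {pred A}) (k chi : bool) : {pred A} :=
  if k then (if chi then A2l else A2r) else (if chi then A1l else A1r).

(* An element of the unitization ~A_{k,chi} = C1 (+) A_{k,chi} is a pair
   (lambda, a) with a in A_{k,chi}; a letter carries its index (k, chi). *)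
Definition letter := ((bool * bool) * (C * A))%type.
Definition l0 : letter := ((false, false), (0, 0)).

Definition uadd (x y : C * A) : C * A := (x.1 + y.1, x.2 + y.2).
Definition uscale (al : C) (x : C * A) : C * A := (al * x.1, al *: x.2).
Definition umul (x y : C * A) : C * A :=
  (x.1 * y.1, x.1 *: y.2 + y.1 *: x.2 + x.2 * y.2).
Definition uone : C * A := (1, 0).

Definition valid_letter (fam : bool -> bool -> {pred A}) (l : letter) :=
  l.2.2 \in fam l.1.1 l.1.2.
Definition valid_word fam (w : seq letter) := all (valid_letter fam) w.

(* F : seq letter -> C encodes a unital linear functional on the unital free
   product *_{k,chi} ~A_{k,chi}: F is multilinear, compatible with the product
   of adjacent letters from the same algebra, with the units, and F(1) = 1.
   (The free product is the tensor algebra on the direct sum modulo exactly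
   these relations.) *)
Record fp_functional (fam : bool -> bool -> {pred A}) (F : seq letter -> C)
  : Prop := {
  fp_unital : F [::] = 1;
  fp_linear : forall u v (j : bool * bool) (x y : C * A) (al : C),
      valid_word fam u -> valid_word fam v ->
      x.2 \in fam j.1 j.2 -> y.2 \in fam j.1 j.2 ->
      F (u ++ (j, uadd (uscale al x) y) :: v)
        = al * F (u ++ (j, x) :: v) + F (u ++ (j, y) :: v);
  fp_merge : forall u v (j : bool * bool) (x y : C * A),
      valid_word fam u -> valid_word fam v ->
      x.2 \in fam j.1 j.2 -> y.2 \in fam j.1 j.2 ->
      F (u ++ (j, x) :: (j, y) :: v) = F (u ++ (j, umul x y) :: v);
  fp_unit : forall u v (j : bool * bool),
      valid_word fam u -> valid_word fam v ->
      F (u ++ (j, uone) :: v) = F (u ++ v) }.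

(* positions 0..n-1 listed in the total order prec_chi: left positions in
   increasing order, then right positions in decreasing order *)
Definition chi_order (w : seq letter) : seq nat :=
  [seq i <- iota 0 (size w) | (nth l0 w i).1.2]
  ++ rev [seq i <- iota 0 (size w) | ~~ (nth l0 w i).1.2].

Fixpoint group_runs (f : nat -> bool) (s : seq nat) : seq (seq nat) :=
  match s with
  | [::] => [::]
  | i :: s' =>
      match group_runs f s' with
      | (j :: b) :: rest =>
          if f i == f j then (i :: j :: b) :: rest
          else [:: i] :: (j :: b) :: rest
      | r => [:: i] :: r
      end
  end.

Definition pi_blocks (w : seq letter) : seq (seq nat) :=
  group_runs (fun i => (nth l0 w i).1.1) (chi_order w).

Definition subword (w : seq letter) (V : seq nat) : seq letter :=
  [seq nth l0 w i | i <- sort leq V].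

Definition cbifree_rule fam (Phi Psi : seq letter -> C) :=
  forall w, valid_word fam w -> (0 < size w)%N ->
    (forall V, V \in pi_blocks w -> Psi (subword w V) = 0) ->
    Psi w = 0 /\ Phi w = \prod_(V <- pi_blocks w) Phi (subword w V).

Definition evalU (w : seq letter) : A :=
  foldr (fun l acc => (l.2.1 *: 1 + l.2.2) * acc) 1 w.
Definition aug (w : seq letter) : C := \prod_(l <- w) l.2.1.

(* restrictions of (Phi, Psi): (~phi_1, delta_1) on the algebra 1 part and
   (~phi_2, ~phi_2) on the algebra 2 part, where ~phi_k is the unital
   extension of phi_k = phi o iota |_{A_{k,l} ⊔ A_{k,r}} *)
Definition restrict_rule fam (phi : A -> C) (Phi Psi : seq letter -> C) :=
  forall w, valid_word fam w ->
    (all (fun l => l.1.1 == alg1) w -> Phi w = phi (evalU w) /\ Psi w = aug w)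
 /\ (all (fun l => l.1.1 == alg2) w ->
       Phi w = phi (evalU w) /\ Psi w = phi (evalU w)).

(* bi-monotonic independence of (A_{1,l},A_{1,r}) and (A_{2,l},A_{2,r}) in the
   order 1 < 2: phi o iota equals phi_1 |>> phi_2, the restriction of the first
   component of the (unique) c-bi-free product (Phi,Psi) of (~phi_1,delta_1)
   and (~phi_2,~phi_2) to the non-unital free product. *)
Definition bimonotone_indep (phi : A -> C) (fam : bool -> bool -> {pred A}) :=
  exists Phi Psi : seq letter -> C,
    [/\ fp_functional fam Phi, fp_functional fam Psi,
        restrict_rule fam phi Phi Psi, cbifree_rule fam Phi Psi &
        forall w, valid_word fam w -> (0 < size w)%N ->
          all (fun l => l.2.1 == 0) w -> phi (evalU w) = Phi w].

End Defs.

From mathcomp Require Import all_boot all_algebra ring.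
Import GRing.Theory Num.Theory.
Local Open Scope ring_scope.
Set Implicit Arguments. Unset Strict Implicit.

(* Write [a°] for [a - phi a].  Let [x] be in [A_{1,l}], [y] in [A_{2,l}] and [z]
   in [A_{2,r}].  In the words [x y z] and [z x y] the letter [x] is first in the
   chi-order, so pi_{chi,omega} has the two blocks [{x}] and [{y, z}]; once the
   pair is suitably centred, the c-bi-free rule gives [phi (x y z) = phi x phi (y z)]
   and [phi (z x y) = phi x phi (z y)].  In the adjoint words [z°* y°* x*] and
   [y°* x* z°*], however, [x*] lies between the two letters of algebra 2 in the
   chi-order, giving three centred blocks; hence [phi (x y° z°) = phi (z° x y°) = 0],
   i.e. both values are [phi x phi y phi z].  Choosing [phi x <> 0] yields the
   theorem.  Positivity of [phi] is used only through [phi (star a) = (phi a)^*]. *)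

Section StarAlgebra.
Variables (C : numClosedFieldType) (A : algType C) (star : A -> A).
Hypothesis hstar : is_star star.

Lemma starD a b : star (a + b) = star a + star b.
Proof. by have := star_semilin hstar 1 a b; rewrite !scale1r conjC1 scale1r. Qed.

Lemma star0 : star 0 = 0.
Proof. by apply: (addIr (star 0)); rewrite -starD !add0r. Qed.

Lemma starZ al a : star (al *: a) = al^* *: star a.
Proof. by have := star_semilin hstar al a 0; rewrite !addr0 star0 addr0. Qed.

Lemma star1 : star 1 = 1.
Proof. by have := star_mul hstar (star 1) 1; rewrite mulr1 (star_invol hstar) mulr1. Qed.

Lemma star_unit lam a : star (lam%:A + a) = lam^*%:A + star a.
Proof. by rewrite starD starZ star1. Qed.

End StarAlgebra.

Section State.
Variables (C : numClosedFieldType) (A : algType C) (star : A -> A) (phi : A -> C).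
Hypothesis hphi : is_state star phi.

Lemma stateD a b : phi (a + b) = phi a + phi b.
Proof. by have := state_lin hphi 1 a b; rewrite scale1r mul1r. Qed.

Lemma state0 : phi 0 = 0.
Proof. by apply: (addIr (phi 0)); rewrite -stateD !add0r. Qed.

Lemma stateZ al a : phi (al *: a) = al * phi a.
Proof. by have := state_lin hphi al a 0; rewrite !addr0 state0 addr0. Qed.

Lemma state_unit_add lam a : phi (lam%:A + a) = lam + phi a.
Proof. by rewrite stateD stateZ (state_unit hphi) mulr1. Qed.

Lemma state_center a : phi ((- phi a)%:A + a) = 0.
Proof. by rewrite state_unit_add addNr. Qed.

Lemma state_mulr_unit u lam a : phi (u * (lam%:A + a)) = lam * phi u + phi (u * a).
Proof. by rewrite mulrDr -scalerAr mulr1 stateD stateZ. Qed.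

Lemma state_mull_unit u lam a : phi ((lam%:A + a) * u) = lam * phi u + phi (a * u).
Proof. by rewrite mulrDl -scalerAl mul1r stateD stateZ. Qed.

Lemma state_mul_unit_mid u v lam a :
  phi (u * (lam%:A + a) * v) = lam * phi (u * v) + phi (u * a * v).
Proof. by rewrite mulrDr mulrDl -scalerAr mulr1 -scalerAl stateD stateZ. Qed.

Lemma state_star (hstar : is_star star) y : phi (star y) = (phi y)^*.
Proof.
have real_sq z : (phi (star z * z))^* = phi (star z * z).
  exact/geC0_conj/(state_pos hphi).
have real_sum z : (phi z + phi (star z))^* = phi z + phi (star z).
  have -> : phi z + phi (star z) = phi (star (1 + z) * (1 + z)) - 1 - phi (star z * z).
    rewrite (starD hstar) (star1 hstar) mulrDl !mulrDr !mul1r mulr1 !stateD.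
    by rewrite (state_unit hphi); ring.
  by rewrite !rmorphB rmorph1 /= !real_sq.
set p := phi y; set q := phi (star y).
have sum_re : p^* + q^* = p + q by rewrite -[RHS]real_sum rmorphD.
have diff_im : p^* - q^* = q - p.
  have := real_sum ('i *: y); rewrite (starZ hstar) conjCi !stateZ -/p -/q.
  rewrite rmorphD !rmorphM rmorphN /= conjCi => E.
  apply: (mulfI (neq0Ci C)).
  rewrite (_ : 'i * _ = - (- 'i * p^* + - - 'i * q^*)); last ring.
  by rewrite E; ring.
have : (q - p^*) *+ 2 = p + q - (p^* + q^*) + (q - p - (p^* - q^*)) by ring.
by rewrite sum_re diff_im !subrr addr0 => /eqP; rewrite mulrn_eq0 subr_eq0 => /eqP.
Qed.

End State.

Lemma evalU_cat (C : numClosedFieldType) (A : algType C) (u v : seq (letter A)) :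
  evalU (u ++ v) = evalU u * evalU v.
Proof. by elim: u => [|l u IH] /=; rewrite ?mul1r // IH mulrA. Qed.

Lemma fp_functional_evalU (C : numClosedFieldType) (A : algType C)
    (phi : A -> C) (fam : bool -> bool -> {pred A}) (Phi : seq (letter A) -> C) :
  (forall al a b, phi (al *: a + b) = al * phi a + phi b) -> phi 1 = 1 ->
  fp_functional fam Phi -> (forall j : bool * bool, 0 \in fam j.1 j.2) ->
  (forall w, valid_word fam w -> (0 < size w)%N ->
     all (fun l => l.2.1 == 0) w -> phi (evalU w) = Phi w) ->
  forall w, valid_word fam w -> Phi w = phi (evalU w).
Proof.
move=> phi_lin phi1 PhiF fam0 Phi_ext.
(* Induct on the suffix [v]; the prefix [u] collects the letters whose scalar
   part has already been split off. *)
suff split_scalars v u : valid_word fam u -> all (fun l => l.2.1 == 0) u ->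
    valid_word fam v -> Phi (u ++ v) = phi (evalU (u ++ v)).
  by move=> w; apply: (split_scalars w [::]).
elim: v u => [|[j [lam y]] v IHv] u u_val u0 /=.
  by rewrite cats0; case: u u_val u0 => [|l u] *; rewrite ?(fp_unital PhiF) ?phi1 ?Phi_ext.
rewrite /valid_word /= => /andP [y_val v_val].
have split_letter : (j, (lam, y)) = (j, uadd (uscale lam (@uone C A)) (0, y)).
  by rewrite /uadd /uscale /uone /= mulr1 addr0 scaler0 add0r.
rewrite [in LHS]split_letter (fp_linear PhiF) ?fam0 // (fp_unit PhiF) // IHv //.
rewrite -[u ++ (j, (0, y)) :: v]cat_rcons (IHv (rcons u (j, (0, y)))) //; first last.
- by rewrite all_rcons u0 eqxx.
- by rewrite /valid_word all_rcons; apply/andP.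
rewrite -phi_lin cat_rcons !evalU_cat /= scale0r add0r.
by rewrite mulrDl mulrDr -scalerAl mul1r -scalerAr.
Qed.

Section BiMonotone.
Variables (C : numClosedFieldType) (A : algType C) (star : A -> A) (phi : A -> C).
Variables (A1l A1r A2l A2r : {pred A}) (Phi Psi : seq (letter A) -> C).
Hypotheses (hstar : is_star star) (hphi : is_state star phi).
Hypotheses (sA1l : is_star_subalg star A1l) (sA1r : is_star_subalg star A1r).
Hypotheses (sA2l : is_star_subalg star A2l) (sA2r : is_star_subalg star A2r).
Local Notation fam := (fam4 A1l A1r A2l A2r).
Local Notation letter1l x := ((alg1, lft), (0, x)).
Local Notation letter2 s lam y := ((alg2, s), (lam, y)).
Hypotheses (PhiF : fp_functional fam Phi) (PhiPsi_restr : restrict_rule fam phi Phi Psi).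
Hypothesis PhiPsi_cbifree : cbifree_rule fam Phi Psi.
Hypothesis Phi_ext : forall w, valid_word fam w -> (0 < size w)%N ->
  all (fun l => l.2.1 == 0) w -> phi (evalU w) = Phi w.

Lemma fam0 (j : bool * bool) : 0 \in fam j.1 j.2.
Proof. by case: j => [[] []]; apply: sub0; eassumption. Qed.

Lemma Phi_evalU w : valid_word fam w -> Phi w = phi (evalU w).
Proof.
exact: fp_functional_evalU (state_lin hphi) (state_unit hphi) PhiF fam0 Phi_ext w.
Qed.

Lemma valid_subword w V : valid_word fam w -> valid_word fam (subword w V).
Proof.
move=> w_val; apply/allP => _ /mapP [i _ ->].
have [i_lt | i_ge] := ltnP i (size w); first by move/allP: w_val; apply; apply: mem_nth.
by rewrite nth_default //; apply: (fam0 (false, false)).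
Qed.

Lemma Psi_alg1_letter x : x \in A1l -> Psi [:: letter1l x] = 0.
Proof.
move=> x_in; have x_val : valid_word fam [:: letter1l x].
  by rewrite /valid_word /= /valid_letter x_in.
by have [/(_ isT) [_ ->] _] := PhiPsi_restr x_val; rewrite /aug big_seq1.
Qed.

Lemma Psi_alg2 u : valid_word fam u -> all (fun l => l.1.1 == alg2) u ->
  Psi u = phi (evalU u).
Proof. by move=> u_val u2; have [_ /(_ u2) [_ ->]] := PhiPsi_restr u_val. Qed.

(* Once [Psi] vanishes on every block, a block of algebra 2 contributes the
   factor [Phi = Psi = 0] to the c-bi-free product formula for [Phi w]. *)
Lemma phi_evalU_eq0 w : valid_word fam w ->
  all (fun V => Psi (subword w V) == 0) (pi_blocks w) ->
  has (fun V => all (fun l => l.1.1 == alg2) (subword w V)) (pi_blocks w) ->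
  phi (evalU w) = 0.
Proof.
move=> w_val /allP Psi0 /hasP [V V_in V_alg2].
have w_gt0 : (0 < size w)%N by case: w {w_val Psi0 V_alg2} V_in.
rewrite -Phi_evalU //.
have [_ ->] := PhiPsi_cbifree w_val w_gt0 (fun V V_in => eqP (Psi0 V V_in)).
rewrite (big_rem V V_in) /= Phi_evalU ?valid_subword //.
by rewrite -Psi_alg2 ?valid_subword // (eqP (Psi0 V V_in)) mul0r.
Qed.

Lemma Psi_alg2_letter s y lam : y \in fam alg2 s ->
  Psi [:: letter2 s lam y] = phi (lam%:A + y).
Proof.
by move=> y_in; rewrite Psi_alg2 /evalU /= ?mulr1 // /valid_word /= /valid_letter y_in.
Qed.

Lemma phi_centered_A1l_A2 s x y lam : x \in A1l -> y \in fam alg2 s ->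
  phi (lam%:A + y) = 0 -> phi (x * (lam%:A + y)) = 0 /\ phi ((lam%:A + y) * x) = 0.
Proof.
move=> x_in y_in y0; have := Psi_alg2_letter lam y_in; rewrite y0 => Psi_y.
split.
- suff : phi (evalU [:: letter1l x; letter2 s lam y]) = 0.
    by rewrite /evalU /= scale0r add0r mulr1.
  apply: phi_evalU_eq0; first by rewrite /valid_word /= /valid_letter /= x_in y_in.
    by case: s {y_in y0} Psi_y; rewrite /pi_blocks /chi_order /subword /= => ->;
      rewrite Psi_alg1_letter ?eqxx.
  by case: s {y_in y0 Psi_y}.
- suff : phi (evalU [:: letter2 s lam y; letter1l x]) = 0.
    by rewrite /evalU /= scale0r add0r mulr1.
  apply: phi_evalU_eq0; first by rewrite /valid_word /= /valid_letter /= x_in y_in.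
    by case: s {y_in y0} Psi_y; rewrite /pi_blocks /chi_order /subword /= => ->;
      rewrite Psi_alg1_letter ?eqxx.
  by case: s {y_in y0 Psi_y}.
Qed.

Lemma phi_two_blocks x y z lam mu : x \in A1l -> y \in A2l -> z \in A2r ->
  phi ((lam%:A + y) * (mu%:A + z)) = 0 -> phi (x * ((lam%:A + y) * (mu%:A + z))) = 0.
Proof.
move=> x_in y_in z_in yz0.
have Psi_yz : Psi [:: letter2 lft lam y; letter2 rgt mu z] = 0.
  by rewrite Psi_alg2 /evalU /= ?mulr1 // /valid_word /= /valid_letter /= y_in z_in.
suff : phi (evalU [:: letter1l x; letter2 lft lam y; letter2 rgt mu z]) = 0.
  by rewrite /evalU /= scale0r add0r mulr1.
apply: phi_evalU_eq0 => //; first by rewrite /valid_word /= /valid_letter /= x_in y_in z_in.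
by rewrite /pi_blocks /chi_order /subword /= Psi_alg1_letter // Psi_yz eqxx.
Qed.

Lemma phi_two_blocks_mid x y z lam mu : x \in A1l -> y \in A2l -> z \in A2r ->
  phi ((mu%:A + z) * (lam%:A + y)) = 0 -> phi ((mu%:A + z) * (x * (lam%:A + y))) = 0.
Proof.
move=> x_in y_in z_in zy0.
have Psi_zy : Psi [:: letter2 rgt mu z; letter2 lft lam y] = 0.
  by rewrite Psi_alg2 /evalU /= ?mulr1 // /valid_word /= /valid_letter /= y_in z_in.
suff : phi (evalU [:: letter2 rgt mu z; letter1l x; letter2 lft lam y]) = 0.
  by rewrite /evalU /= scale0r add0r mulr1.
apply: phi_evalU_eq0 => //; first by rewrite /valid_word /= /valid_letter /= x_in y_in z_in.
by rewrite /pi_blocks /chi_order /subword /= Psi_alg1_letter // Psi_zy eqxx.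
Qed.

Lemma phi_three_blocks x y z lam mu : x \in A1l -> y \in A2l -> z \in A2r ->
  phi (lam%:A + y) = 0 -> phi (mu%:A + z) = 0 ->
  phi ((mu%:A + z) * ((lam%:A + y) * x)) = 0 /\ phi ((lam%:A + y) * (x * (mu%:A + z))) = 0.
Proof.
move=> x_in y_in z_in y0 z0.
have := Psi_alg2_letter (s := lft) lam y_in; have := Psi_alg2_letter (s := rgt) mu z_in.
rewrite y0 z0 => Psi_z Psi_y; split.
- suff : phi (evalU [:: letter2 rgt mu z; letter2 lft lam y; letter1l x]) = 0.
    by rewrite /evalU /= scale0r add0r mulr1.
  apply: phi_evalU_eq0 => //.
    by rewrite /valid_word /= /valid_letter /= x_in y_in z_in.
  by rewrite /pi_blocks /chi_order /subword /= Psi_alg1_letter // Psi_y Psi_z eqxx.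
- suff : phi (evalU [:: letter2 lft lam y; letter1l x; letter2 rgt mu z]) = 0.
    by rewrite /evalU /= scale0r add0r mulr1.
  apply: phi_evalU_eq0 => //.
    by rewrite /valid_word /= /valid_letter /= x_in y_in z_in.
  by rewrite /pi_blocks /chi_order /subword /= Psi_alg1_letter // Psi_y Psi_z eqxx.
Qed.

Lemma phi_mul_A1l_A2 s x y : x \in A1l -> y \in fam alg2 s ->
  phi (x * y) = phi x * phi y /\ phi (y * x) = phi y * phi x.
Proof.
move=> x_in y_in; have [] := phi_centered_A1l_A2 x_in y_in (state_center hphi y).
rewrite (state_mulr_unit hphi) (state_mull_unit hphi) => xy0 yx0.
by split; apply: subr0_eq; [rewrite -xy0 | rewrite -yx0]; ring.
Qed.

Lemma phi_mul_A1l_A2l_A2r x y z : x \in A1l -> y \in A2l -> z \in A2r ->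
  phi (x * (y * z)) = phi x * phi (y * z) /\ phi (z * (x * y)) = phi x * phi (z * y).
Proof.
move=> x_in y_in z_in.
have [xy _] := phi_mul_A1l_A2 (s := lft) x_in y_in.
have [xz zx] := phi_mul_A1l_A2 (s := rgt) x_in z_in.
have phiE := (state_mulr_unit hphi, state_mull_unit hphi, state_unit_add hphi).
split.
- pose c := phi (y * z) - phi y * phi z.
  (* [c = phi (y° z°)]; these scalars make [Psi] vanish on the block [{y, z}] *)
  have yz0 : phi (((- c - phi y)%:A + y) * ((1 - phi z)%:A + z)) = 0.
    by rewrite !phiE /c; ring.
  have E := phi_two_blocks x_in y_in z_in yz0.
  rewrite mulrA !phiE (state_mul_unit_mid hphi) xy xz in E.
  by rewrite mulrA; apply: subr0_eq; rewrite -E /c; ring.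
- pose c := phi (z * y) - phi y * phi z.
  have zy0 : phi (((1 - phi z)%:A + z) * ((- c - phi y)%:A + y)) = 0.
    by rewrite !phiE /c; ring.
  have E := phi_two_blocks_mid x_in y_in z_in zy0.
  rewrite !phiE mulrA (state_mulr_unit hphi) xy zx in E.
  by rewrite mulrA; apply: subr0_eq; rewrite -E /c; ring.
Qed.

Lemma phi_mul_A1l_A2l_A2r_adjoint x y z : x \in A1l -> y \in A2l -> z \in A2r ->
  phi (x * (y * z)) = phi x * phi y * phi z /\ phi (z * (x * y)) = phi x * phi y * phi z.
Proof.
move=> x_in y_in z_in.
have [xy _] := phi_mul_A1l_A2 (s := lft) x_in y_in.
have [xz zx] := phi_mul_A1l_A2 (s := rgt) x_in z_in.
have star_center a : phi ((- phi a)^*%:A + star a) = 0.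
  by rewrite -(star_unit hstar) (state_star hphi hstar) (state_center hphi) conjC0.
have [E1 E2] := phi_three_blocks (subStar sA1l x_in) (subStar sA2l y_in)
  (subStar sA2r z_in) (star_center y) (star_center z).
rewrite -!(star_unit hstar) -!(star_mul hstar) !(state_star hphi hstar) in E1 E2.
move/eqP: E1; move/eqP: E2; rewrite !conjC_eq0 => /eqP E2 /eqP E1.
rewrite !(state_mulr_unit hphi) (state_mul_unit_mid hphi) xy xz in E1.
rewrite (state_mulr_unit hphi) -[_ * x * y]mulrA !(state_mull_unit hphi) xy zx in E2.
by split; apply: subr0_eq; [rewrite mulrA -E1 | rewrite -E2]; ring.
Qed.

Lemma phi_mul_A2l_A2r x y z : x \in A1l -> phi x != 0 -> y \in A2l -> z \in A2r ->
  phi (y * z) = phi y * phi z /\ phi (z * y) = phi y * phi z.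
Proof.
move=> x_in x_ne0 y_in z_in.
have [xyz zxy] := phi_mul_A1l_A2l_A2r x_in y_in z_in.
have [xyz' zxy'] := phi_mul_A1l_A2l_A2r_adjoint x_in y_in z_in.
by split; apply: (mulfI x_ne0); rewrite mulrA; [rewrite -xyz xyz' | rewrite -zxy zxy'].
Qed.

End BiMonotone.

Theorem mainTheorem5 (C : numClosedFieldType) (A : algType C)
  (star : A -> A) (phi : A -> C) (A1l A1r A2l A2r : {pred A}) :
  is_star star -> is_state star phi ->
  is_star_subalg star A1l -> is_star_subalg star A1r ->
  is_star_subalg star A2l -> is_star_subalg star A2r ->
  bimonotone_indep phi (fam4 A1l A1r A2l A2r) ->
  (exists x, x \in A1l /\ phi x != 0) ->
  forall a b, a \in A2l -> b \in A2r ->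
    phi (a * b) = phi a * phi b /\ phi (b * a) = phi a * phi b.
Proof.
move=> hstar hphi sA1l sA1r sA2l sA2r [Phi [Psi [PhiF _ restr cbifree ext]]].
move=> [x [x_in x_ne0]] a b a_in b_in.
exact: (phi_mul_A2l_A2r hstar hphi sA1l sA1r sA2l sA2r PhiF restr cbifree ext
  x_in x_ne0 a_in b_in).
Qed.
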